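(* Let $T_1$ be a quadtree in $\mathbb{R}^d$ with $n$ cells. For every $j$ with $1\le j\le d+1$, the set $T_j$ of cells with brand $j$ in the extended quadtree construction has $\mathcal{O}(2^d n)$ cells.
   Context: A quadtree on an axis-aligned root hypercube $R\subset\mathbb{R}^d$ is a hierarchical decomposition in which every node has an associated axis-aligned hypercube (cell) and is either a leaf or has $2^d$ equal-sized children whose cells subdivide its cell. The size $|C|$ of a cell is its edge length. Two cells are neighbors if they are interior-disjoint and share (part of) a $(d-1)$-dimensional facet. For an integer $j$, a cell $C$ is $2^j$-smooth if every leaf neighboring $C$ has size at most $2^j|C|$. Extended quadtree: the cells of a given quadtree $T_1$ are called true cells and get brand $1$. Recursively, for $j\ge1$, let $T^j$ be the quadtree formed by $\bigcup_{i\le j}T_i$, and let $T_{j+1}$ be the minimal set of cells obtained by splitting cells of $T^j$ such that every cell of $T_j$ is $2^j$-smooth in the resulting quadtree; the cells of $T_{j+1}$ get brand $j+1$. The extended quadtree is $T^*=T^{d+1}$. *)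

From mathcomp Require Import all_boot all_order.
From mathcomp Require Import finmap.
Set Implicit Arguments. Unset Strict Implicit. Unset Printing Implicit Defensive.
Local Open Scope fset_scope.

(* The root hypercube is normalized to [0,1]^d.  A cell at level k with
   position a : 'I_d -> nat is the box  prod_i [a_i/2^k, (a_i+1)/2^k];
   its size (edge length) is 2^-k. *)
Definition cell (d : nat) := (nat * {ffun 'I_d -> nat})%type.

Definition lvl {d} (c : cell d) : nat := c.1.
Definition pos {d} (c : cell d) (i : 'I_d) : nat := c.2 i.

Definition valid_cell {d} (c : cell d) : Prop := forall i, pos c i < 2 ^ lvl c.

Definition root_cell (d : nat) : cell d := (0, [ffun _ => 0]).

Definition is_child {d} (c' c : cell d) : Prop :=
  lvl c' = (lvl c).+1 /\ forall i, pos c' i %/ 2 = pos c i.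

Definition quadtree {d} (Q : {fset cell d}) : Prop :=
  [/\ root_cell d \in Q,
      (forall c, c \in Q -> valid_cell c),
      (forall c' c, c' \in Q -> is_child c' c -> c \in Q) &
      (forall c, c \in Q -> (exists2 c', is_child c' c & c' \in Q) ->
                 forall c', is_child c' c -> c' \in Q)].

Definition leaf {d} (Q : {fset cell d}) (c : cell d) : Prop :=
  c \in Q /\ forall c', is_child c' c -> c' \notin Q.

(* Endpoints of the i-th side of c, measured in units of 2^-L (L >= lvl c). *)
Definition lo {d} (c : cell d) (i : 'I_d) (L : nat) : nat := pos c i * 2 ^ (L - lvl c).
Definition hi {d} (c : cell d) (i : 'I_d) (L : nat) : nat := (pos c i).+1 * 2 ^ (L - lvl c).

(* Neighbors: interior-disjoint and sharing part of a (d-1)-facet, i.e. in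
   exactly one coordinate the sides touch at an endpoint, and in all other
   coordinates the sides overlap in an interval of positive length. *)
Definition neighbors {d} (c c' : cell d) : Prop :=
  let L := maxn (lvl c) (lvl c') in
  exists i : 'I_d,
    (hi c i L = lo c' i L \/ hi c' i L = lo c i L) /\
    (forall i', i' != i ->
       maxn (lo c i' L) (lo c' i' L) < minn (hi c i' L) (hi c' i' L)).

(* C is 2^j-smooth in Q: every leaf of Q neighboring C has size at most
   2^j |C|, i.e. 2^-(lvl L) <= 2^j * 2^-(lvl C), i.e. lvl C <= lvl L + j. *)
Definition smooth {d} (Q : {fset cell d}) (j : nat) (C : cell d) : Prop :=
  forall L, leaf Q L -> neighbors L C -> lvl C <= lvl L + j.

(* One step of the extended quadtree construction: given the cells Tj of
   brand j and the union Tcum = T^j, the set Tnext = T_{j+1} consists of the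
   new cells of the (inclusion-)minimal quadtree containing T^j in which all
   cells of Tj are 2^j-smooth. *)
Definition ext_step {d} (j : nat) (Tj Tcum Tnext : {fset cell d}) : Prop :=
  let Q := Tcum `|` Tnext in
  [/\ [disjoint Tcum & Tnext],
      quadtree Q,
      (forall C, C \in Tj -> smooth Q j C) &
      (forall Q' : {fset cell d}, quadtree Q' -> Tcum `<=` Q' ->
         (forall C, C \in Tj -> smooth Q' j C) -> Q `<=` Q')].

Definition Tcum {d} (T : nat -> {fset cell d}) (j : nat) : {fset cell d} :=
  \big[fsetU/fset0]_(1 <= i < j.+1) T i.

Definition extended_quadtree {d} (T : nat -> {fset cell d}) : Prop :=
  quadtree (T 1) /\
  forall j, 1 <= j <= d -> ext_step j (T j) (Tcum T j) (T j.+1).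

From mathcomp Require Import all_boot all_order finmap zify.
Set Implicit Arguments. Unset Strict Implicit. Unset Printing Implicit Defensive.

(* Let I be the internal cells of T_1 and Z the union of I with the valid cells one
   level coarser than a cell of I whose closures meet it; splitting every cell of Z
   gives a quadtree V containing T_1.  The 2^d |I| children of internal cells lie in
   T_1, so |V| <= 1 + 2^d (2^d + 1) |I| <= 3 2^d n.
   Smoothness rests on one geometric fact: a leaf L neighbouring C with
   |L| > 2^j |C| contains a cell of size 2^j |C| whose closure meets C, so C is
   2^j-smooth in a quadtree containing all such cells.  This makes the cells of T_1
   2-smooth and the cells of V 4-smooth in V; by minimality every step of the
   construction stays inside V, and each T_j has at most |V| cells. *)

Section Cells.
Variable d : nat.
Implicit Types (c x y L N C : cell d) (Q : {fset cell d}).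

Definition bits := {ffun 'I_d -> bool}.

Definition child c (b : bits) : cell d := ((lvl c).+1, [ffun i => 2 * pos c i + b i]).
Definition parent c : cell d := ((lvl c).-1, [ffun i => pos c i %/ 2]).
Definition child_bits c : bits := [ffun i => odd (pos c i)].
Definition ancestor c k : cell d := (k, [ffun i => pos c i %/ 2 ^ (lvl c - k)]).
(* In each coordinate, [b] selects one of the two cells of the parent level whose
   closure meets that of [x]. *)
Definition coarse_touching x (b : bits) : cell d :=
  ((lvl x).-1, [ffun i => if b i then (pos x i).+1 %/ 2 else ((pos x i).+1 %/ 2).-1]).
Definition valid_cellb c := [forall i, pos c i < 2 ^ lvl c].

Lemma lvl_child c b : lvl (child c b) = (lvl c).+1. Proof. by []. Qed.
Lemma pos_child c b i : pos (child c b) i = 2 * pos c i + b i.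
Proof. by rewrite /pos ffunE. Qed.
Lemma lvl_parent c : lvl (parent c) = (lvl c).-1. Proof. by []. Qed.
Lemma pos_parent c i : pos (parent c) i = pos c i %/ 2.
Proof. by rewrite /pos ffunE. Qed.
Lemma lvl_coarse_touching x b : lvl (coarse_touching x b) = (lvl x).-1. Proof. by []. Qed.
Lemma pos_coarse_touching x b i : pos (coarse_touching x b) i =
  if b i then (pos x i).+1 %/ 2 else ((pos x i).+1 %/ 2).-1.
Proof. by rewrite /pos ffunE. Qed.
Lemma lvl_ancestor c k : lvl (ancestor c k) = k. Proof. by []. Qed.
Lemma pos_ancestor c k i : pos (ancestor c k) i = pos c i %/ 2 ^ (lvl c - k).
Proof. by rewrite /pos ffunE. Qed.

Definition cellE := (lvl_child, pos_child, lvl_parent, pos_parent,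
  lvl_coarse_touching, pos_coarse_touching, lvl_ancestor, pos_ancestor).

Lemma cell_ext c c' : lvl c = lvl c' -> (forall i, pos c i = pos c' i) -> c = c'.
Proof.
case: c c' => [l f] [l' f']; rewrite /lvl /pos /= => -> eq_f.
by congr pair; apply/ffunP.
Qed.

Lemma child_is_child c b : is_child (child c b) c.
Proof. by split=> // i; rewrite pos_child; case: (b i); lia. Qed.

Lemma is_child_parent c' c : is_child c' c -> c = parent c'.
Proof. by case=> lvl_c' pos_c'; apply: cell_ext => [|i]; rewrite cellE ?lvl_c'. Qed.

Lemma is_child_childE c' c : is_child c' c -> c' = child c (child_bits c').
Proof.
case=> lvl_c' pos_c'; apply: cell_ext => [|i]; rewrite cellE ?lvl_c' // -pos_c' ffunE.
by rewrite {1}(divn_eq (pos c' i) 2) modn2 mulnC.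
Qed.

Lemma parent_child c b : parent (child c b) = c.
Proof. exact/esym/is_child_parent/child_is_child. Qed.

Lemma child_bits_child c b : child_bits (child c b) = b.
Proof. by apply/ffunP => i; rewrite ffunE pos_child oddD oddM; case: (b i). Qed.

Lemma parent_is_child c : 0 < lvl c -> is_child c (parent c).
Proof. by move=> c_gt0; split=> [|i]; rewrite cellE ?prednK. Qed.

Lemma ancestor_is_child c k : k < lvl c -> is_child (ancestor c k.+1) (ancestor c k).
Proof.
move=> lt_k; split=> // i; rewrite !pos_ancestor -divnMA -expnSr.
by congr (_ %/ 2 ^ _); lia.
Qed.

Lemma ancestor_self c : ancestor c (lvl c) = c.
Proof. by apply: cell_ext => // i; rewrite pos_ancestor subnn divn1. Qed.

Lemma valid_cellP c : reflect (valid_cell c) (valid_cellb c).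
Proof. exact: forallP. Qed.

Lemma valid_child c b : valid_cell c -> valid_cell (child c b).
Proof. by move=> vc i; have := vc i; rewrite pos_child expnS; case: (b i); lia. Qed.

Lemma valid_parent c : valid_cell c -> valid_cell (parent c).
Proof.
move=> vc i; have := vc i; rewrite pos_parent lvl_parent.
by case: (lvl c) => [|l] /=; rewrite ?expn0 ?expnS; lia.
Qed.

Lemma valid_lvl0 c : valid_cell c -> lvl c = 0 -> c = root_cell d.
Proof.
by move=> vc c0; apply: cell_ext => // i; have := vc i; rewrite c0 /pos ffunE; lia.
Qed.

Lemma valid_of_ancestor c k : k <= lvl c -> valid_cell (ancestor c k) -> valid_cell c.
Proof.
move=> le_k va i; have := va i; rewrite pos_ancestor ltn_divLR ?expn_gt0 //.
by rewrite -expnD subnKC.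
Qed.

Lemma ancestor_mem Q c k : quadtree Q -> c \in Q -> k <= lvl c -> ancestor c k \in Q.
Proof.
case=> _ _ parent_mem _ cQ; move def_n : (lvl c - k) => n.
elim: n k def_n => [|n IHn] k def_n le_k.
  by rewrite (_ : k = lvl c) ?ancestor_self //; lia.
by apply: (parent_mem (ancestor c k.+1)); [apply: IHn; lia | apply: ancestor_is_child; lia].
Qed.

Lemma leaf_ancestor_notin Q L N :
  quadtree Q -> leaf Q L -> lvl L < lvl N -> ancestor N (lvl L) = L -> N \notin Q.
Proof.
move=> qQ [_ no_child] lt_LN anc_N; apply/negP => NQ.
have child_L := ancestor_is_child lt_LN; rewrite anc_N in child_L.
by have /negP[] := no_child _ child_L; apply: ancestor_mem.
Qed.

End Cells.

Lemma clamp_meets D S l p : 0 < D -> 0 < S ->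
  l * (S * D) <= p.+1 -> p <= l.+1 * (S * D) ->
  let n := minn (maxn (p %/ D) (l * S)) (l * S + S.-1) in
  [/\ n %/ S = l, n * D <= p.+1 & p <= n.+1 * D].
Proof.
move=> D_gt0 S_gt0 lo_p hi_p n.
have p_div := divn_eq p D; have p_mod := ltn_pmod p D_gt0.
set q := p %/ D in n p_div *.
have n_range : l * S <= n < l * S + S by rewrite /n; lia.
split.
- by rewrite (_ : n = l * S + (n - l * S)) ?divnMDl ?divn_small; lia.
- rewrite /n; nia.
- rewrite /n; nia.
Qed.

Section Closures.
Variable d : nat.
Implicit Types (c x y g L N C : cell d) (Q : {fset cell d}).

(* Meant for [lvl N <= lvl C], so that all endpoints are exact at level [lvl C]. *)
Definition closure_meets N C : Prop :=
  forall i, lo N i (lvl C) <= hi C i (lvl C) /\ lo C i (lvl C) <= hi N i (lvl C).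

Definition touches y x : Prop := lvl x = (lvl y).+1 /\ closure_meets y x.

Lemma closure_meetsE N C k : lvl C = lvl N + k ->
  closure_meets N C <->
  forall i, pos N i * 2 ^ k <= (pos C i).+1 /\ pos C i <= (pos N i).+1 * 2 ^ k.
Proof.
move=> e; rewrite /closure_meets /lo /hi e subnn addKn expn0.
by split=> meets i; have := meets i; rewrite !muln1.
Qed.

Lemma touchesE y x : touches y x <->
  lvl x = (lvl y).+1 /\ forall i, pos y i * 2 <= (pos x i).+1 /\ pos x i <= (pos y i).+1 * 2.
Proof.
split=> -[lvl_x meets]; split=> //;
have [to_arith of_arith] := closure_meetsE (k := 1) (etrans lvl_x (esym (addn1 _)));
by rewrite expn1 in to_arith of_arith; auto.
Qed.

Lemma lo_le_hi c i k : lo c i k <= hi c i k.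
Proof. by rewrite leq_mul2r leqnSn orbT. Qed.

Lemma neighbors_closure_meets L C : lvl L <= lvl C -> neighbors L C -> closure_meets L C.
Proof.
rewrite /neighbors => /maxn_idPr -> [i [touch overlap]] k.
have := lo_le_hi L k (lvl C); have := lo_le_hi C k (lvl C).
case: (eqVneq k i) => [-> | /overlap]; lia.
Qed.

Definition nearest_descendant L C t : cell d :=
  let S := 2 ^ (t - lvl L) in
  (t, [ffun i => minn (maxn (pos C i %/ 2 ^ (lvl C - t)) (pos L i * S))
                       (pos L i * S + S.-1)]).

Lemma nearest_descendantP L C t : lvl L <= t <= lvl C -> closure_meets L C ->
  ancestor (nearest_descendant L C t) (lvl L) = L /\
  closure_meets (nearest_descendant L C t) C.
Proof.
case/andP=> le_Lt le_tC meets_LC; set N := nearest_descendant L C t.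
set S := 2 ^ (t - lvl L); set D := 2 ^ (lvl C - t).
have e_SD : 2 ^ (lvl C - lvl L) = S * D by rewrite -expnD; congr (2 ^ _); lia.
have [to_arith _] := closure_meetsE (esym (subnKC (leq_trans le_Lt le_tC))).
have coord i : [/\ pos N i %/ S = pos L i, pos N i * D <= (pos C i).+1
                  & pos C i <= (pos N i).+1 * D].
  have [lo_C hi_C] := to_arith meets_LC i; rewrite e_SD in lo_C hi_C.
  have := clamp_meets (expn_gt0 2 (lvl C - t)) (expn_gt0 2 (t - lvl L)) lo_C hi_C.
  by rewrite /= /pos ffunE.
split; first by apply: cell_ext => // i; rewrite pos_ancestor; case: (coord i).
by apply/(closure_meetsE (k := lvl C - t)); [rewrite subnKC | move=> i; case: (coord i)].
Qed.

Lemma smooth_of_meeting_cells Q j C : quadtree Q ->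
  (forall N, 0 < lvl N -> lvl N = lvl C - j -> valid_cell N -> closure_meets N C ->
     N \in Q) ->
  smooth Q j C.
Proof.
move=> qQ meeting_mem L leaf_L nb; rewrite leqNgt; apply/negP => lt_LC.
have meets_LC : closure_meets L C by apply: neighbors_closure_meets nb; lia.
have t_range : lvl L <= lvl C - j <= lvl C by lia.
have [anc_N meets_N] := nearest_descendantP t_range meets_LC.
set N := nearest_descendant L C (lvl C - j) in anc_N meets_N.
have valid_N : valid_cell N.
  apply: (valid_of_ancestor (k := lvl L)); first by rewrite /=; lia.
  by rewrite anc_N; case: qQ leaf_L => _ valid_Q _ _ [/valid_Q].
by have := leaf_ancestor_notin qQ leaf_L _ anc_N; rewrite meeting_mem //=; lia.
Qed.

Lemma smooth_le Q i j C : i <= j -> smooth Q i C -> smooth Q j C.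
Proof.
by move=> le_ij smooth_i L leaf_L nb; rewrite (leq_trans (smooth_i L leaf_L nb)) ?leq_add2l.
Qed.

Lemma touches_parent_self y : 0 < lvl y -> touches (parent y) y.
Proof. by move=> y_gt0; apply/touchesE; split=> [|i]; rewrite cellE; lia. Qed.

Lemma touches_parent y x : 0 < lvl y -> touches y x -> touches (parent y) (parent x).
Proof.
move=> y_gt0 /touchesE[lvl_x meets]; apply/touchesE.
by split=> [|i]; rewrite !cellE; [lia | have := meets i; lia].
Qed.

Lemma touches_grandparent y x : 0 < lvl y -> touches y x -> touches (parent (parent x)) y.
Proof.
move=> y_gt0 /touchesE[lvl_x meets]; apply/touchesE.
by split=> [|i]; rewrite !cellE; [lia | have := meets i; lia].
Qed.

Lemma closure_meets_parent N C :
  lvl N < lvl C -> closure_meets N C -> closure_meets N (parent C).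
Proof.
move=> lt_NC; set k := (lvl C - lvl N).-1.
have e_C : lvl C = lvl N + k.+1 by rewrite /k; lia.
have e_pC : lvl (parent C) = lvl N + k by rewrite lvl_parent e_C addnS.
move/(closure_meetsE e_C) => meets; apply/(closure_meetsE e_pC) => i.
have := meets i; rewrite pos_parent expnS; set M := 2 ^ k; nia.
Qed.

Lemma touches_common_finer N g y :
  0 < lvl N -> touches N y -> touches g y -> touches (parent N) g.
Proof.
move=> N_gt0 /touchesE[lvl_y meets_N] /touchesE[lvl_y' meets_g]; apply/touchesE.
by split=> [|i]; rewrite !cellE; [lia | have := meets_N i; have := meets_g i; lia].
Qed.

Lemma coarse_touching_touches x b : 0 < lvl x -> touches (coarse_touching x b) x.
Proof.
move=> x_gt0; apply/touchesE.
by split=> [|i]; rewrite !cellE; [lia | case: (b i); lia].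
Qed.

Lemma touches_coarse_touching y x :
  touches y x -> y = coarse_touching x [ffun i => pos y i == (pos x i).+1 %/ 2].
Proof.
move=> /touchesE[lvl_x meets]; apply: cell_ext => [|i]; rewrite cellE ?lvl_x // ffunE.
by have := meets i; case: eqP; lia.
Qed.

End Closures.

Local Open Scope fset_scope.

Section Children.
Variable d : nat.
Implicit Types (A : {fset cell d}).

Definition children A := [fset child y b | y in A, b in {: bits d}].

Lemma size_enum_bits : size (enum_finmem (mem {: bits d})) = 2 ^ d.
Proof. by rewrite -cardE card_ffun card_bool card_ord. Qed.

Lemma card_imfset2_bits_leq (K : choiceType) (f : cell d -> bits d -> K) A :
  #|` [fset f y b | y in A, b in {: bits d}]| <= #|` A| * 2 ^ d.
Proof.
rewrite Imfset.imfset2E /= size_seq_fset (leq_trans (size_undup _)) //.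
by rewrite size_allpairs size_enum_bits.
Qed.

Lemma card_children A : #|` children A| = #|` A| * 2 ^ d.
Proof.
rewrite /children Imfset.imfset2E /= size_seq_fset undup_id ?size_allpairs ?size_enum_bits //.
apply: allpairs_uniq => [||[y b] [y' b'] _ _ /= e]; rewrite ?fset_uniq ?enum_uniq //.
move: (congr1 (@parent d) e) (congr1 (@child_bits d) e).
by rewrite !parent_child !child_bits_child => -> ->.
Qed.

Lemma children_mem A y b : y \in A -> child y b \in children A.
Proof. by move=> yA; apply: in_imfset2. Qed.

Lemma childrenP A c :
  reflect (exists2 y, y \in A & exists b, c = child y b) (c \in children A).
Proof.
apply: (iffP (imfset2P _ _ _ _ _)) => [[y yA [b _ ->]] | [y yA [b ->]]].
  by exists y => //; exists b.
by exists y => //; exists b.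
Qed.
End Children.


Section BalancedTree.
Variables (d : nat) (T1 : {fset cell d}).
Hypothesis quadtree_T1 : quadtree T1.
Implicit Types (c x y g N C : cell d).

Definition internal := [fset x in T1 | [exists b, child x b \in T1]].

Definition split_cells := internal `|`
  [fset y in [fset coarse_touching x b | x in internal, b in {: bits d}] | valid_cellb y].

Definition balanced_tree := root_cell d |` children split_cells.

Lemma internal_sub x : x \in internal -> x \in T1.
Proof. by rewrite !inE => /andP[]. Qed.

Lemma children_internal_sub : children internal `<=` T1.
Proof.
case: quadtree_T1 => _ _ _ all_children; apply/fsubsetP => c /childrenP[x].
rewrite inE => /andP[xT /existsP[b' cb'T]] [b ->].
apply: (all_children x xT); last exact: child_is_child.
by exists (child x b') => //; apply: child_is_child.
Qed.

Lemma parent_internal x : x \in T1 -> 0 < lvl x -> parent x \in internal.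
Proof.
case: quadtree_T1 => _ _ parent_mem _ xT x_gt0; have px := parent_is_child x_gt0.
rewrite !inE (parent_mem _ _ xT px); apply/existsP; exists (child_bits x).
by rewrite -is_child_childE.
Qed.

Lemma internal_split x : x \in internal -> x \in split_cells.
Proof. by move=> xI; rewrite in_fsetU xI. Qed.

Lemma touching_split x y : x \in internal -> touches y x -> valid_cell y -> y \in split_cells.
Proof.
move=> xI /touches_coarse_touching -> /valid_cellP valid_y.
by rewrite in_fsetU !inE valid_y in_imfset2 ?orbT.
Qed.

Lemma split_valid y : y \in split_cells -> valid_cell y.
Proof.
case: quadtree_T1 => _ valid_T1 _ _; rewrite in_fsetU !inE => /orP[/andP[/valid_T1 //] | ].
by case/andP=> _ /valid_cellP.
Qed.

Lemma split_cases y : y \in split_cells -> 0 < lvl y ->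
  y \in internal \/ exists2 x, x \in internal & touches y x.
Proof.
rewrite in_fsetU => /orP[yI | ]; first by left.
rewrite !inE => /andP[/imfset2P[x xI [b _ ->]] _] y_gt0; right; exists x => //.
by apply: coarse_touching_touches; move: y_gt0; rewrite lvl_coarse_touching; lia.
Qed.

Lemma split_parent y : y \in split_cells -> 0 < lvl y -> parent y \in split_cells.
Proof.
move=> yZ y_gt0; case: (split_cases yZ y_gt0) => [yI | [x xI touch_yx]].
  exact/internal_split/parent_internal/y_gt0/internal_sub.
have x_gt0 : 0 < lvl x by case: touch_yx => ->.
apply: (touching_split (parent_internal (internal_sub xI) x_gt0)).
  exact: touches_parent.
exact/valid_parent/split_valid.
Qed.

Lemma split_coarse_touching y : y \in split_cells -> 0 < lvl y ->
  exists2 g, g \in internal & touches g y.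
Proof.
move=> yZ y_gt0; case: (split_cases yZ y_gt0) => [yI | [x xI touch_yx]].
  exists (parent y); last exact: touches_parent_self.
  exact/parent_internal/y_gt0/internal_sub.
exists (parent (parent x)); last exact: touches_grandparent.
have [lvl_x _] := touch_yx; have x_gt0 : 0 < lvl x by rewrite lvl_x.
have px_T1 := internal_sub (parent_internal (internal_sub xI) x_gt0).
by apply: parent_internal px_T1 _; rewrite lvl_parent lvl_x.
Qed.

Lemma split_balanced y : y \in split_cells -> y \in balanced_tree.
Proof.
move=> yZ; case: (posnP (lvl y)) => [y0 | y_gt0].
  by rewrite (valid_lvl0 (split_valid yZ) y0) fset1U1.
rewrite (is_child_childE (parent_is_child y_gt0)); apply/fset1Ur/children_mem.
exact: split_parent.
Qed.

Lemma balanced_tree_quadtree : quadtree balanced_tree.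
Proof.
have parent_split c' c : c' \in balanced_tree -> is_child c' c -> c \in split_cells.
  case/fset1UP => [-> [] // | /childrenP[y yZ [b ->]] child_c].
  by rewrite (is_child_parent child_c) parent_child.
split.
- exact: fset1U1.
- move=> c /fset1UP[-> i | /childrenP[y yZ [b ->]]].
    by rewrite /pos /root_cell ffunE.
  exact/valid_child/split_valid.
- by move=> c' c c'V child_c; apply/split_balanced/(parent_split c').
- move=> c cV [c' child_c c'V] c'' child_c''.
  by rewrite (is_child_childE child_c''); apply/fset1Ur/children_mem/(parent_split c').
Qed.

Lemma T1_sub_balanced : T1 `<=` balanced_tree.
Proof.
case: quadtree_T1 => _ valid_T1 _ _; apply/fsubsetP => x xT.
case: (posnP (lvl x)) => [x0 | x_gt0].
  by rewrite (valid_lvl0 (valid_T1 _ xT) x0) fset1U1.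
rewrite (is_child_childE (parent_is_child x_gt0)); apply/fset1Ur/children_mem.
exact/internal_split/parent_internal.
Qed.

Lemma touching_balanced N x : x \in internal -> 0 < lvl N -> valid_cell N ->
  touches (parent N) x -> N \in balanced_tree.
Proof.
move=> xI N_gt0 valid_N touch_Nx.
rewrite (is_child_childE (parent_is_child N_gt0)); apply/fset1Ur/children_mem.
exact: touching_split xI touch_Nx (valid_parent valid_N).
Qed.

Lemma T1_smooth C : C \in T1 -> smooth balanced_tree 1 C.
Proof.
move=> CT; apply: smooth_of_meeting_cells balanced_tree_quadtree _.
move=> N N_gt0 lvl_N valid_N meets_NC.
have lvl_C : lvl C = (lvl N).+1 by lia.
apply: (touching_balanced (x := parent C)) => //.
  by apply: parent_internal; rewrite ?lvl_C.
exact: touches_parent.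
Qed.

Lemma balanced_tree_smooth C : C \in balanced_tree -> smooth balanced_tree 2 C.
Proof.
move=> CV; apply: smooth_of_meeting_cells balanced_tree_quadtree _.
move=> N N_gt0 lvl_N valid_N meets_NC.
case/fset1UP: CV lvl_N meets_NC => [-> | /childrenP[y yZ [b ->]]] lvl_N meets_NC.
  by move: N_gt0; rewrite lvl_N.
rewrite lvl_child in lvl_N; have y_gt0 : 0 < lvl y by lia.
have [g gI touch_gy] := split_coarse_touching yZ y_gt0.
apply: (touching_balanced gI) => //; apply: (touches_common_finer N_gt0 _ touch_gy).
split; first lia.
by rewrite -(parent_child y b); apply: closure_meets_parent; rewrite // lvl_child; lia.
Qed.

Lemma card_internal : #|` internal| * 2 ^ d <= #|` T1|.
Proof. by rewrite -card_children; apply: fsubset_leq_card children_internal_sub. Qed.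

Lemma card_split_cells : #|` split_cells| <= #|` internal| * (2 ^ d).+1.
Proof.
rewrite mulnS (leq_trans (leq_card_fsetU _ _)) // leq_add2l.
exact: leq_trans (fsubset_leq_card (fset_sub _ _)) (card_imfset2_bits_leq _ _).
Qed.

Lemma card_balanced_tree : #|` balanced_tree| <= 3 * 2 ^ d * #|` T1|.
Proof.
have T1_gt0 : 0 < #|` T1|.
  by rewrite cardfs_gt0; apply/fset0Pn; exists (root_cell d); case: quadtree_T1.
have := card_internal; have := card_split_cells; have := expn_gt0 2 d.
rewrite /balanced_tree cardfsU1 card_children; set P := 2 ^ d; nia.
Qed.

End BalancedTree.

Section Brands.
Variables (d : nat) (T : nat -> {fset cell d}).

Lemma Tcum1 : Tcum T 1 = T 1.
Proof. by rewrite /Tcum big_nat1. Qed.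

Lemma TcumS j : 0 < j -> Tcum T j.+1 = Tcum T j `|` T j.+1.
Proof. by move=> j_gt0; rewrite /Tcum big_nat_recr. Qed.

Lemma brand_sub_Tcum j : 0 < j -> T j `<=` Tcum T j.
Proof.
case: j => // -[_ | j _]; first by rewrite Tcum1.
by rewrite TcumS // fsubsetUr.
Qed.

Lemma Tcum_sub_balanced_tree j : extended_quadtree T -> 0 < j <= d.+1 ->
  Tcum T j `<=` balanced_tree (T 1).
Proof.
case=> quadtree_T1 steps; elim: j => [// | j IHj] /andP[_ le_jd].
case: (posnP j) => [-> | j_gt0]; first by rewrite Tcum1 T1_sub_balanced.
have Tcum_sub : Tcum T j `<=` balanced_tree (T 1) by apply: IHj; lia.
have [_ _ _ minimal] := steps j (introT andP (conj j_gt0 le_jd)).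
rewrite TcumS //; apply: (minimal _ (balanced_tree_quadtree quadtree_T1) Tcum_sub) => C CTj.
case: (ltnP j 2) => [j_lt2 | j_ge2].
  by rewrite (_ : j = 1) in CTj *; [exact: T1_smooth | lia].
apply: smooth_le j_ge2 (balanced_tree_smooth quadtree_T1 _).
exact: fsubsetP Tcum_sub C (fsubsetP (brand_sub_Tcum j_gt0) C CTj).
Qed.

End Brands.

Theorem lemma13 :
  exists c : nat, forall (d : nat) (T : nat -> {fset cell d}),
    extended_quadtree T ->
    forall j, 1 <= j <= d.+1 -> #|` T j| <= c * 2 ^ d * #|` T 1|.
Proof.
exists 3 => d T ext_T j j_range; have [quadtree_T1 _] := ext_T.
apply: leq_trans (card_balanced_tree quadtree_T1); apply: fsubset_leq_card.
apply: fsubset_trans (Tcum_sub_balanced_tree ext_T j_range).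
by apply: brand_sub_Tcum; case/andP: j_range.
Qed.
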